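(* Let $\mathcal H_A$ be a finite-dimensional Hilbert space, $N\ge1$, and let $\mathcal F(A)\subseteq\mathcal D(\mathcal H_A)$ be a convex set of free states, with $N$-partite free states $\mathcal F(A_1\dots A_N)=\mathrm{Conv}\big(\mathcal F(A)\otimes\dots\otimes\mathcal F(A)\big)$ ($N$ factors). Let $\mathcal F'(A)\subseteq\mathcal F(A)$ be affine and let $\Delta'$ be a resource-censoring map for $(\mathcal F(A),\mathcal F'(A))$ satisfying the standing assumptions below, which is moreover entanglement breaking. Then the censorship implemented by $(\Delta')^{\otimes N}$ is unbreakable: there is no $\rho\in\mathcal D(\mathcal H_A^{\otimes N})$ with $\rho\notin\mathcal F(A_1\dots A_N)$ and $(\Delta')^{\otimes N}(\rho)=\rho$. In particular, $\mathrm{Aff}\big(\mathcal F'(A)^{\otimes N}\big)\subseteq\mathrm{Conv}\big(\mathcal F'(A)^{\otimes N}\big)\subseteq\mathcal F(A_1\dots A_N)$.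
   Context: $\mathcal D(\mathcal H)$ denotes the density operators on a finite-dimensional Hilbert space $\mathcal H$. For $S\subseteq\mathcal D(\mathcal H)$, $\mathrm{Aff}(S)=\{\sum_a t_a\sigma_a:\ \text{finitely many }\sigma_a\in S,\ t_a\in\mathbb R,\ \sum_a t_a=1\}\cap\mathcal D(\mathcal H)$ and $\mathrm{Conv}(S)$ is the same with $t_a\ge0$; $S$ is affine if $\mathrm{Aff}(S)=S$ and convex if $\mathrm{Conv}(S)=S$. $S^{\otimes N}=S\otimes\dots\otimes S=\{\rho_1\otimes\dots\otimes\rho_N:\rho_a\in S\}$. A channel is a linear completely positive trace-preserving map. A resource-censoring (RC) map for $(\mathcal F(A),\mathcal F'(A))$ is a channel $\Delta'$ on operators on $\mathcal H_A$ with $\Delta'(\rho)\in\mathcal F(A)$ for all $\rho\in\mathcal D(\mathcal H_A)$ and $\Delta'(\sigma)=\sigma$ for all $\sigma\in\mathcal F'(A)$. Standing assumptions: $\Delta'\circ\Delta'=\Delta'$ and $\mathcal F'(A)$ is exactly the set of density operators fixed by $\Delta'$. $\Delta'$ is entanglement breaking if for every finite-dimensional $\mathcal K$ and every $\rho\in\mathcal D(\mathcal K\otimes\mathcal H_A)$, $(\mathrm{id}_{\mathcal K}\otimes\Delta')(\rho)\in\mathrm{Conv}(\mathcal D(\mathcal K)\otimes\mathcal D(\mathcal H_A))$. *)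

From mathcomp Require Import all_boot all_order all_algebra.
From mathcomp Require Export mxtens.
Set Implicit Arguments. Unset Strict Implicit. Unset Printing Implicit Defensive.
Import Order.TTheory GRing.Theory Num.Theory.
Local Open Scope ring_scope.

Section Quantum.
Variable C : numClosedFieldType.

Definition adjmx {m n} (A : 'M[C]_(m, n)) : 'M[C]_(n, m) := (map_mx Num.conj A)^T.

Definition psd {n} (A : 'M[C]_n) : Prop :=
  A = adjmx A /\ forall v : 'cV[C]_n, 0 <= (adjmx v *m A *m v) 0 0.

Definition density {n} (A : 'M[C]_n) : Prop := psd A /\ \tr A = 1.

Definition conv {n} (S : 'M[C]_n -> Prop) (X : 'M[C]_n) : Prop :=
  density X /\
  exists (m : nat) (t : 'I_m -> C) (s : 'I_m -> 'M[C]_n),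
    (forall a, 0 <= t a) /\ (forall a, S (s a)) /\
    \sum_(a < m) t a = 1 /\ X = \sum_(a < m) t a *: s a.

Definition aff {n} (S : 'M[C]_n -> Prop) (X : 'M[C]_n) : Prop :=
  density X /\
  exists (m : nat) (t : 'I_m -> C) (s : 'I_m -> 'M[C]_n),
    (forall a, t a \is Num.real) /\ (forall a, S (s a)) /\
    \sum_(a < m) t a = 1 /\ X = \sum_(a < m) t a *: s a.

Definition linmap {a b} (f : 'M[C]_a -> 'M[C]_b) : Prop :=
  forall (c : C) X Y, f (c *: X + Y) = c *: f X + f Y.

(* tensor product f (x) g of linear maps, defined by linear extension on
   matrix units: (f (x) g)(X) = sum X_{(i,k),(j,l)} f(E_ij) (x) g(E_kl) *)
Definition map_tens {a a' b b'} (f : 'M[C]_a -> 'M[C]_a') (g : 'M[C]_b -> 'M[C]_b')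
  (X : 'M[C]_(a * b)) : 'M[C]_(a' * b') :=
  \sum_(i < a) \sum_(j < a) \sum_(k < b) \sum_(l < b)
     X (mxtens_index (i, k)) (mxtens_index (j, l)) *:
       (f (delta_mx i j) *t g (delta_mx k l)).

Definition channel {d} (f : 'M[C]_d -> 'M[C]_d) : Prop :=
  linmap f /\
  (forall (k : nat) (X : 'M[C]_(k * d)), psd X -> psd (map_tens id f X)) /\
  (forall X, \tr (f X) = \tr X).

Definition rc_map {d} (F F' : 'M[C]_d -> Prop) (D : 'M[C]_d -> 'M[C]_d) : Prop :=
  channel D /\ (forall rho, density rho -> F (D rho)) /\ (forall s, F' s -> D s = s).

Definition entanglement_breaking {d} (D : 'M[C]_d -> 'M[C]_d) : Prop :=
  forall (k : nat) (rho : 'M[C]_(k * d)), density rho ->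
    conv (fun X : 'M[C]_(k * d) =>
            exists (s : 'M[C]_k) (t : 'M[C]_d), density s /\ density t /\ X = s *t t)
         (map_tens id D rho).

(* dimension d^N of H^{(x) N}, with d^(N+1) = d * d^N definitionally *)
Fixpoint pw (d n : nat) : nat := if n is n'.+1 then d * pw d n' else 1.

(* S^{(x) N} = { rho_1 (x) ... (x) rho_N } (with a trailing trivial 1x1 factor) *)
Fixpoint prodset {d} (S : 'M[C]_d -> Prop) (n : nat) : 'M[C]_(pw d n) -> Prop :=
  match n with
  | 0 => fun X => X = 1%:M
  | n'.+1 => fun X => exists (r : 'M[C]_d) (s : 'M[C]_(pw d n')),
                        S r /\ @prodset d S n' s /\ X = r *t s
  end.

Fixpoint tpow {d} (D : 'M[C]_d -> 'M[C]_d) (n : nat) : 'M[C]_(pw d n) -> 'M[C]_(pw d n) :=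
  match n with
  | 0 => id
  | n'.+1 => map_tens D (@tpow d D n')
  end.

End Quantum.
Arguments prodset {C d} S n _.
Arguments tpow {C d} D n _.

(** The channel [D] is idempotent and entanglement breaking, and its image
    consists of fixed points, i.e. of states of [F'].  By induction on [n],
    [D^{(x) n+1} = (D (x) D^{(x) n}) o (D (x) id)]: applying [D (x) id] first
    breaks all entanglement between the first factor and the rest, leaving a
    convex combination of product states [t (x) s], which the remaining map
    sends to [D t (x) D^{(x) n} s] with [D t] in [F'] and, by induction,
    [D^{(x) n} s] in [Conv (F'^{(x) n})].  Hence every state in the image of
    [D^{(x) N}] lies in [Conv (F'^{(x) N})]; a fixed point of [D^{(x) N}],
    in particular any affine combination of elements of [F'^{(x) N}], is such
    a state. *)

From mathcomp Require Import all_boot all_order all_algebra.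
Import Order.TTheory GRing.Theory Num.Theory.
Local Open Scope ring_scope.
Set Implicit Arguments. Unset Strict Implicit. Unset Printing Implicit Defensive.

Lemma big_mxtens_index (V : nmodType) a b (F : 'I_(a * b) -> V) :
  \sum_p F p = \sum_i \sum_k F (mxtens_index (i, k)).
Proof.
rewrite pair_big /= (reindex (@mxtens_index a b)) /=.
  by apply: eq_bigr => -[i k].
by exists (@mxtens_unindex a b) => p _; rewrite (mxtens_indexK, mxtens_unindexK).
Qed.

Definition mxtens_swap a b (p : 'I_(a * b)) : 'I_(b * a) :=
  mxtens_index ((mxtens_unindex p).2, (mxtens_unindex p).1).

Lemma mxtens_swapK a b : cancel (@mxtens_swap a b) (@mxtens_swap b a).
Proof. by move=> p; case: (mxtens_indexP p) => i k; rewrite /mxtens_swap !mxtens_indexK. Qed.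

Lemma big_mxtens_swap (V : nmodType) a b (F : 'I_(b * a) -> V) :
  \sum_p F p = \sum_q F (mxtens_swap q).
Proof. by apply: reindex; exists (@mxtens_swap b a) => p _; rewrite mxtens_swapK. Qed.

Section Quantum.
Variable C : numClosedFieldType.

Lemma linmap0 a b (f : 'M[C]_a -> 'M[C]_b) : linmap f -> f 0 = 0.
Proof.
move=> hf; have h := hf 1 0 0; rewrite scale1r addr0 scale1r in h.
by apply: (addrI (f 0)); rewrite addr0 -h.
Qed.

Lemma linmapZ a b (f : 'M[C]_a -> 'M[C]_b) c X : linmap f -> f (c *: X) = c *: f X.
Proof. by move=> hf; rewrite -[c *: X]addr0 hf linmap0 // addr0. Qed.

Lemma linmapD a b (f : 'M[C]_a -> 'M[C]_b) X Y : linmap f -> f (X + Y) = f X + f Y.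
Proof. by move=> hf; have := hf 1 X Y; rewrite !scale1r. Qed.

Lemma linmap_sum a b (f : 'M[C]_a -> 'M[C]_b) (I : finType) (F : I -> 'M[C]_a) :
  linmap f -> f (\sum_i F i) = \sum_i f (F i).
Proof.
move=> hf; elim/big_rec2: _ => [|i x y _ <-]; first exact: linmap0.
by rewrite linmapD.
Qed.

Lemma linmap_comp a b c (f : 'M[C]_a -> 'M[C]_b) (g : 'M[C]_b -> 'M[C]_c) :
  linmap f -> linmap g -> linmap (fun X => g (f X)).
Proof. by move=> hf hg c0 X Y; rewrite hf hg. Qed.

Lemma linmap_sum_delta a b (f : 'M[C]_a -> 'M[C]_b) A : linmap f ->
  f A = \sum_i \sum_j A i j *: f (delta_mx i j).
Proof.
move=> hf; rewrite {1}(matrix_sum_delta A) linmap_sum //; apply: eq_bigr => i _.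
by rewrite linmap_sum //; apply: eq_bigr => j _; rewrite linmapZ.
Qed.

Lemma tensmxDl m n p q (A B : 'M[C]_(m, n)) (M : 'M[C]_(p, q)) :
  (A + B) *t M = A *t M + B *t M.
Proof. by apply/matrixP=> i j; rewrite !mxE mulrDl. Qed.

Lemma tensmxDr m n p q (A : 'M[C]_(m, n)) (M N : 'M[C]_(p, q)) :
  A *t (M + N) = A *t M + A *t N.
Proof. by apply/matrixP=> i j; rewrite !mxE mulrDr. Qed.

Lemma tensmxZl m n p q c (A : 'M[C]_(m, n)) (M : 'M[C]_(p, q)) :
  (c *: A) *t M = c *: (A *t M).
Proof. by apply/matrixP=> i j; rewrite !mxE mulrA. Qed.

Lemma tensmxZr m n p q c (A : 'M[C]_(m, n)) (M : 'M[C]_(p, q)) :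
  A *t (c *: M) = c *: (A *t M).
Proof. by apply/matrixP=> i j; rewrite !mxE mulrCA. Qed.

Lemma tensmx_suml m n p q (I : finType) (F : I -> 'M[C]_(m, n)) (M : 'M[C]_(p, q)) :
  (\sum_i F i) *t M = \sum_i (F i *t M).
Proof. by elim/big_rec2: _ => [|i x y _ <-]; rewrite ?tens0mx // tensmxDl. Qed.

Lemma tensmx_sumr m n p q (I : finType) (A : 'M[C]_(m, n)) (F : I -> 'M[C]_(p, q)) :
  A *t (\sum_i F i) = \sum_i (A *t F i).
Proof. by elim/big_rec2: _ => [|i x y _ <-]; rewrite ?tensmx0 // tensmxDr. Qed.

Lemma delta_mx_tens a b (i j : 'I_a) (k l : 'I_b) :
  delta_mx (mxtens_index (i, k)) (mxtens_index (j, l))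
  = (delta_mx i j *t delta_mx k l : 'M[C]_(a * b)).
Proof.
apply/matrixP=> p q; case: (mxtens_indexP p) => i0 k0; case: (mxtens_indexP q) => j0 l0.
rewrite tensmxE !mxE -natrM mulnb; congr (_ %:R).
rewrite !(inj_eq (can_inj (@mxtens_indexK _ _))) !xpair_eqE.
by case: (i0 == i); case: (j0 == j); case: (k0 == k); case: (l0 == l).
Qed.

Lemma matrix_sum_delta_tens a b (X : 'M[C]_(a * b)) :
  X = \sum_(i < a) \sum_(j < a) \sum_(k < b) \sum_(l < b)
        X (mxtens_index (i, k)) (mxtens_index (j, l)) *: (delta_mx i j *t delta_mx k l).
Proof.
rewrite {1}[X]matrix_sum_delta big_mxtens_index; apply: eq_bigr => i _.
under eq_bigr do rewrite big_mxtens_index.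
rewrite exchange_big /=; apply: eq_bigr => j _; apply: eq_bigr => k _; apply: eq_bigr => l _.
by rewrite delta_mx_tens.
Qed.

Lemma linmap_eq_tens a b c (L1 L2 : 'M[C]_(a * b) -> 'M[C]_c) :
  linmap L1 -> linmap L2 -> (forall A B, L1 (A *t B) = L2 (A *t B)) ->
  forall X, L1 X = L2 X.
Proof.
move=> h1 h2 h X; rewrite (matrix_sum_delta_tens X) !linmap_sum //.
apply: eq_bigr => i _; rewrite !linmap_sum //.
apply: eq_bigr => j _; rewrite !linmap_sum //.
apply: eq_bigr => k _; rewrite !linmap_sum //.
by apply: eq_bigr => l _; rewrite !linmapZ // h.
Qed.

Lemma map_tens_linmap a a' b b' (f : 'M[C]_a -> 'M[C]_a') (g : 'M[C]_b -> 'M[C]_b') :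
  linmap (map_tens f g).
Proof.
move=> c X Y; rewrite /map_tens scaler_sumr -big_split; apply: eq_bigr => i _.
rewrite scaler_sumr -big_split; apply: eq_bigr => j _.
rewrite scaler_sumr -big_split; apply: eq_bigr => k _.
rewrite scaler_sumr -big_split; apply: eq_bigr => l _.
by rewrite !mxE scalerA scalerDl.
Qed.

Lemma map_tens_tensmx a a' b b' (f : 'M[C]_a -> 'M[C]_a') (g : 'M[C]_b -> 'M[C]_b') A B :
  linmap f -> linmap g -> map_tens f g (A *t B) = f A *t g B.
Proof.
move=> hf hg; rewrite /map_tens (linmap_sum_delta A hf) (linmap_sum_delta B hg).
rewrite tensmx_suml; apply: eq_bigr => i _; rewrite tensmx_suml; apply: eq_bigr => j _.
rewrite tensmx_sumr; apply: eq_bigr => k _; rewrite tensmx_sumr; apply: eq_bigr => l _.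
by rewrite tensmxE tensmxZl tensmxZr scalerA.
Qed.

Lemma map_tens_idem a b (D : 'M[C]_a -> 'M[C]_a) (G : 'M[C]_b -> 'M[C]_b) X :
  linmap D -> linmap G -> (forall Y, D (D Y) = D Y) ->
  map_tens D G (map_tens D id X) = map_tens D G X.
Proof.
move=> hD hG hDD.
apply: (@linmap_eq_tens _ _ _ (fun Y => map_tens D G (map_tens D id Y))) => [||A B].
- exact: linmap_comp (map_tens_linmap _ _) (map_tens_linmap _ _).
- exact: map_tens_linmap.
by rewrite !map_tens_tensmx // hDD.
Qed.

Definition swapmx a b (X : 'M[C]_(a * b)) : 'M[C]_(b * a) :=
  \matrix_(p, q) X (mxtens_swap p) (mxtens_swap q).

Lemma swapmx_linmap a b : linmap (@swapmx a b).
Proof. by move=> c X Y; apply/matrixP => p q; rewrite !mxE. Qed.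

Lemma swapmx_tens a b (A : 'M[C]_a) (B : 'M[C]_b) : swapmx (A *t B) = B *t A.
Proof.
apply/matrixP => p q; case: (mxtens_indexP p) => i k; case: (mxtens_indexP q) => j l.
by rewrite mxE /mxtens_swap !mxtens_indexK /= !tensmxE mulrC.
Qed.

Lemma map_tens_swapmx a b (D : 'M[C]_a -> 'M[C]_a) (X : 'M[C]_(a * b)) : linmap D ->
  map_tens D id X = swapmx (map_tens id D (swapmx X)).
Proof.
move=> hD.
apply: (@linmap_eq_tens _ _ _ _ (fun Y => swapmx (map_tens id D (swapmx Y)))).
- exact: map_tens_linmap.
- exact: linmap_comp (linmap_comp (@swapmx_linmap _ _) (map_tens_linmap _ _))
                     (@swapmx_linmap _ _).
by move=> A B; rewrite swapmx_tens !map_tens_tensmx // swapmx_tens.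
Qed.

Lemma qformE n (X : 'M[C]_n) (v : 'cV[C]_n) :
  (adjmx v *m X *m v) 0 0 = \sum_q \sum_p (v p 0)^* * X p q * v q 0.
Proof.
rewrite mxE; apply: eq_bigr => q _; rewrite mxE mulr_suml.
by apply: eq_bigr => p _; rewrite !mxE.
Qed.

Lemma density_swapmx a b (X : 'M[C]_(a * b)) : density X -> density (swapmx X).
Proof.
move=> [[hX qX] tX]; split; first split.
- apply/matrixP => p q; rewrite !mxE.
  have := congr1 (fun M : 'M[C]_(a * b) => M (mxtens_swap p) (mxtens_swap q)) hX.
  by rewrite /= !mxE => ->.
- move=> v; rewrite qformE.
  have := qX (\col_p v (mxtens_swap p) 0); rewrite qformE.
  congr (_ <= _) => //.
  rewrite big_mxtens_swap; apply: eq_bigr => q _.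
  rewrite big_mxtens_swap; apply: eq_bigr => p _.
  by rewrite !mxE !mxtens_swapK.
- by rewrite -tX /mxtrace big_mxtens_swap; apply: eq_bigr => p _; rewrite mxE mxtens_swapK.
Qed.

Lemma density_mx11 (rho : 'M[C]_1) : density rho -> rho = 1%:M.
Proof.
by move=> [_ t]; rewrite [rho]mx11_scalar -t /mxtrace big_ord1.
Qed.

(* [conv] with an arbitrary total weight [w] and without requiring [X] to be
   a state, which is not known for [D^{(x) n} rho]. *)
Definition nncomb n (S : 'M[C]_n -> Prop) (X : 'M[C]_n) (w : C) :=
  exists l : seq (C * 'M[C]_n), (forall x, x \in l -> 0 <= x.1 /\ S x.2) /\
    \sum_(x <- l) x.1 = w /\ X = \sum_(x <- l) x.1 *: x.2.

Lemma nncomb0 n (S : 'M[C]_n -> Prop) : nncomb S 0 0.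
Proof. by exists [::]; rewrite !big_nil. Qed.

Lemma nncomb_mem n (S : 'M[C]_n -> Prop) Y : S Y -> nncomb S Y 1.
Proof.
move=> hY; exists [:: (1, Y)]; rewrite !big_seq1 scale1r; split => //.
by move=> x; rewrite inE => /eqP -> /=.
Qed.

Lemma nncombD n (S : 'M[C]_n -> Prop) X Y w v :
  nncomb S X w -> nncomb S Y v -> nncomb S (X + Y) (w + v).
Proof.
move=> [l1 [h1 [s1 e1]]] [l2 [h2 [s2 e2]]]; exists (l1 ++ l2).
rewrite !big_cat /= s1 s2 e1 e2; split => // x; rewrite mem_cat => /orP[]; auto.
Qed.

Lemma nncombZ n (S : 'M[C]_n -> Prop) X w c :
  0 <= c -> nncomb S X w -> nncomb S (c *: X) (c * w).
Proof.
move=> hc [l [h [s e]]]; exists [seq (c * x.1, x.2) | x <- l].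
rewrite !big_map /= -s e mulr_sumr scaler_sumr; split; last split => //.
- by move=> x /mapP [y yl ->] /=; have [h1 h2] := h y yl; split => //; exact: mulr_ge0.
by apply: eq_bigr => y _; rewrite scalerA.
Qed.

Lemma nncomb_sum n (S : 'M[C]_n -> Prop) m (p : 'I_m -> C) (Y : 'I_m -> 'M[C]_n) :
  (forall a, 0 <= p a) -> (forall a, nncomb S (Y a) 1) ->
  nncomb S (\sum_a p a *: Y a) (\sum_a p a).
Proof.
move=> hp hY; elim/big_rec2: _ => [|a x y _ h]; first exact: nncomb0.
by apply: nncombD h; have := nncombZ (hp a) (hY a); rewrite mulr1.
Qed.

Lemma nncomb_sub n (S T : 'M[C]_n -> Prop) X w :
  (forall u, S u -> T u) -> nncomb S X w -> nncomb T X w.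
Proof.
move=> hST [l [h [s e]]]; exists l; split => // x xl; have [h1 h2] := h x xl; auto.
Qed.

Lemma nncomb_tensl m n (S : 'M[C]_n -> Prop) (A : 'M[C]_m) V w : nncomb S V w ->
  nncomb (fun Z => exists u, S u /\ Z = A *t u) (A *t V) w.
Proof.
move=> [l [h [s e]]]; exists [seq (x.1, A *t x.2) | x <- l].
rewrite !big_map /= e; split; last split => //.
- by move=> x /mapP [y yl ->] /=; have [h1 h2] := h y yl; split => //; exists y.2.
elim/big_rec2: _ => [|y x1 x2 _ <-]; first by rewrite tensmx0.
by rewrite tensmxDr tensmxZr.
Qed.

Lemma nncomb_linmap m n (S : 'M[C]_m -> Prop) (T : 'M[C]_n -> Prop)
    (L : 'M[C]_m -> 'M[C]_n) X w :
  linmap L -> (forall u, S u -> nncomb T (L u) 1) -> nncomb S X w -> nncomb T (L X) w.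
Proof.
move=> hL hST [l [h [<- ->]]]; elim: l h => [|x l IH] h.
  by rewrite !big_nil linmap0 //; exact: nncomb0.
rewrite !big_cons linmapD // linmapZ //.
have [hx1 hx2] := h x (mem_head _ _).
apply: nncombD; last by apply: IH => y yl; apply: h; rewrite inE yl orbT.
by have := nncombZ hx1 (hST _ hx2); rewrite mulr1.
Qed.

Lemma conv_nncomb n (S : 'M[C]_n -> Prop) X : conv S X <-> density X /\ nncomb S X 1.
Proof.
split.
  move=> [dX [m [t [s [ht [hs [st eX]]]]]]]; split => //.
  by rewrite eX -st; apply: nncomb_sum => // a; apply: nncomb_mem.
move=> [dX [l [h [st e]]]]; split => //.
exists (size l), (fun a => (nth (0, 0) l a).1), (fun a => (nth (0, 0) l a).2).
split; last split; last split.
- by move=> a; have [] := h _ (mem_nth (0, 0) (ltn_ord a)).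
- by move=> a; have [] := h _ (mem_nth (0, 0) (ltn_ord a)).
- by rewrite -st (big_nth (0, 0)) big_mkord.
by rewrite e (big_nth (0, 0)) big_mkord.
Qed.

Lemma tpow_linmap d (D : 'M[C]_d -> 'M[C]_d) n : linmap (tpow D n).
Proof. by case: n => [//|n]; exact: map_tens_linmap. Qed.

Lemma prodset_sub d (S T : 'M[C]_d -> Prop) n u :
  (forall r, S r -> T r) -> prodset S n u -> prodset T n u.
Proof.
move=> hST; elim: n u => [|n IH] u //= [r [s [hr [hs ->]]]].
by exists r, s; auto.
Qed.

Lemma tpow_prodset_fixed d (S : 'M[C]_d -> Prop) (D : 'M[C]_d -> 'M[C]_d) n u :
  linmap D -> (forall r, S r -> D r = r) -> prodset S n u -> tpow D n u = u.
Proof.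
move=> hD hS; elim: n u => [|n IH] u //= [r [s [hr [hs ->]]]].
by rewrite (map_tens_tensmx _ _ hD (tpow_linmap D (n := n))) hS // IH.
Qed.

Lemma tpow_density_nncomb d (F' : 'M[C]_d -> Prop) (D : 'M[C]_d -> 'M[C]_d) :
  linmap D -> (forall X, D (D X) = D X) -> (forall rho, density rho -> F' (D rho)) ->
  entanglement_breaking D ->
  forall n (rho : 'M[C]_(pw d n)), density rho -> nncomb (prodset F' n) (tpow D n rho) 1.
Proof.
move=> hD hDD hF' EB; elim=> [|n IH] rho drho.
  by rewrite /= (density_mx11 drho); apply: nncomb_mem.
have /conv_nncomb [_ hsep] := EB _ _ (density_swapmx drho).
have hDn := tpow_linmap D (n := n).
rewrite /= -map_tens_idem // map_tens_swapmx //.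
apply: (nncomb_linmap (L := fun Z => map_tens D (tpow D n) (swapmx Z)) _ _ hsep).
  exact: linmap_comp (@swapmx_linmap _ _) (map_tens_linmap _ _).
move=> u [s [t [ds [dt ->]]]].
rewrite swapmx_tens map_tens_tensmx //.
apply: nncomb_sub (nncomb_tensl (D t) (IH s ds)).
by move=> Z [v [hv ->]]; exists (D t), v; auto.
Qed.

End Quantum.

Theorem theorem3 (C : numClosedFieldType) (d N : nat)
  (F F' : 'M[C]_d -> Prop) (D : 'M[C]_d -> 'M[C]_d) :
  (0 < N)%N ->
  (* F(A) is a convex set of states *)
  (forall X, F X -> density X) ->
  (forall X, conv F X <-> F X) ->
  (* F'(A) is an affine subset of F(A) *)
  (forall X, F' X -> F X) ->
  (forall X, aff F' X <-> F' X) ->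
  (* D is an RC map for (F, F') satisfying the standing assumptions *)
  rc_map F F' D ->
  (forall X, D (D X) = D X) ->
  (forall X, F' X <-> density X /\ D X = X) ->
  entanglement_breaking D ->
  (~ exists rho : 'M[C]_(pw d N),
       density rho /\ ~ conv (prodset F N) rho /\ tpow D N rho = rho) /\
  (forall X, aff (prodset F' N) X -> conv (prodset F' N) X) /\
  (forall X, conv (prodset F' N) X -> conv (prodset F N) X).
Proof.
move=> _ hFd _ hF'F _ [[hDlin _] [hDF hDF']] hDD hF'fix EB.
have hF'D rho : density rho -> F' (D rho).
  by move=> drho; apply/hF'fix; split; [apply/hFd/hDF | apply: hDD].
have image_conv rho : density rho -> tpow D N rho = rho -> conv (prodset F' N) rho.
  move=> drho fixed; apply/conv_nncomb; split => //.
  by rewrite -fixed; apply: tpow_density_nncomb.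
have conv_sub X : conv (prodset F' N) X -> conv (prodset F N) X.
  move=> /conv_nncomb [dX hX]; apply/conv_nncomb; split => //.
  by apply: nncomb_sub hX => u; apply: prodset_sub.
split; [|split] => //.
- by move=> [rho [drho [nconv fixed]]]; apply/nconv/conv_sub/image_conv.
move=> X [dX [m [t [s [_ [hs [_ eX]]]]]]]; apply: image_conv => //.
have hDN := tpow_linmap D (n := N).
rewrite eX linmap_sum //; apply: eq_bigr => a _.
by rewrite linmapZ // (tpow_prodset_fixed hDlin hDF' (hs a)).
Qed.
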